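(* Let $k\geq 2$ and let $G$ be a graph of order $n\geq 11k-4$ that does not contain $k\cdot P_3$ as a subgraph. Then $\lambda_n(G)\geq -\sqrt{(k-1)(n-k+1)}$, with equality if and only if $G=K_{k-1,n-k+1}$.
   Context: Graphs are finite and simple; $\lambda_n(G)$ denotes the least eigenvalue of the adjacency matrix of $G$. $P_3$ is the path on 3 vertices and $k\cdot P_3$ is the disjoint union of $k$ copies of $P_3$. $K_{a,b}$ is the complete bipartite graph with parts of sizes $a$ and $b$. *)

From HB Require Import structures.
From mathcomp Require Import all_boot all_order all_algebra.
From mathcomp Require Import polyrcf.
Set Implicit Arguments. Unset Strict Implicit. Unset Printing Implicit Defensive.
Import Order.TTheory GRing.Theory Num.Theory.
Local Open Scope ring_scope.

Definition simple_graph (n : nat) (e : rel 'I_n) : Prop :=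
  symmetric e /\ irreflexive e.

Definition adjmx (R : nzRingType) (n : nat) (e : rel 'I_n) : 'M[R]_n :=
  \matrix_(i, j) (e i j)%:R.

(* Least eigenvalue: the smallest real root of the characteristic polynomial
   (rootsR lists the roots in increasing order). For a real symmetric matrix
   all eigenvalues are real, so this is lambda_n. *)
Definition least_eigenvalue (R : rcfType) (n : nat) (A : 'M[R]_n) : R :=
  head 0 (rootsR (char_poly A)).

(* G contains k.P_3 as a (not necessarily induced) subgraph: an injective map of
   the vertices of k disjoint copies of P_3 (copy i has path (i,0)-(i,1)-(i,2))
   preserving edges. *)
Definition contains_kP3 (n k : nat) (e : rel 'I_n) : Prop :=
  exists f : 'I_k * 'I_3 -> 'I_n, injective f /\
    forall i : 'I_k,
      e (f (i, inord 0)) (f (i, inord 1)) /\ e (f (i, inord 1)) (f (i, inord 2)).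

(* G is (isomorphic to) the complete bipartite graph K_{a, n-a}: some set S of
   a vertices such that x ~ y iff exactly one of x, y lies in S. *)
Definition is_complete_bipartite (n a : nat) (e : rel 'I_n) : Prop :=
  exists S : {set 'I_n}, #|S| = a /\
    forall x y, e x y = ((x \in S) != (y \in S)).

From HB Require Import structures.
From mathcomp Require Import all_boot all_order all_algebra.
From mathcomp Require Import polyrcf.
From mathcomp Require Import zify ring lra.
From Stdlib Require Import Classical.

(* Let x be an eigenvector for the least eigenvalue l, so that l |x|^2 is the sum of
   x_i x_j over ordered pairs of adjacent vertices.  Dropping the nonnegative terms only
   decreases this sum; the remaining terms come from the edges with x_i x_j < 0, which form
   a subgraph H of G, bipartite between {x > 0} and {x <= 0}.  By Cauchy-Schwarz and AM-GM
   the remaining sum is at least -sqrt(e(H)) |x|^2, and H contains no k.P3 since G does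
   not.  So it suffices that a k.P3-free bipartite graph on n >= 11k - 4 vertices has at
   most (k-1)(n-k+1) edges.  This goes by induction on k: a vertex of degree >= 2k + 2 can
   be deleted, because in a triangle-free graph each path of a packing has at most two
   vertices adjacent to it; if all degrees are at most 2k + 1, one counts the edges around
   a maximal packing of paths.  In the equality case all the inequalities are tight: H is
   complete between {x > 0} and {x < 0}, the edge count forces these parts to have sizes
   k - 1 and n - k + 1, and G = H.  Conversely K_{k-1,n-k+1} has the eigenvector equal to
   sqrt(n-k+1) on one part and to -sqrt(k-1) on the other. *)

Set Implicit Arguments. Unset Strict Implicit. Unset Printing Implicit Defensive.
Import Order.TTheory GRing.Theory Num.Theory.

Lemma double_sum_cut (V : nmodType) n (P : {set 'I_n}) (F : 'I_n -> 'I_n -> V) :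
  (forall i j, F i j = F j i) -> (forall i j, (i \in P) = (j \in P) -> F i j = 0%R) ->
  (\sum_i \sum_j F i j = (\sum_(i in P) \sum_j F i j) *+ 2)%R.
Proof.
move=> Fsym F0.
have Fout i : i \notin P -> (\sum_j F i j = \sum_(j in P) F i j)%R.
  move=> iP; rewrite [LHS](bigID (mem P)) /= [X in (_ + X)%R]big1 ?addr0 // => j jP.
  by apply: F0; rewrite (negPf iP) (negPf jP).
rewrite (bigID (mem P)) /= mulr2n; congr (_ + _)%R.
rewrite (eq_bigr _ Fout) exchange_big /=; apply: eq_bigr => i iP.
rewrite [RHS](bigID (mem P)) /= [X in (X + _)%R]big1 ?add0r => [|j jP].
  by apply: eq_bigr => j _; rewrite Fsym.
by apply: F0; rewrite iP jP.
Qed.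

(** * Packings of paths on three vertices *)

Section Packings.
Variable n : nat.
Implicit Types (h e : rel 'I_n) (A B P U W : {set 'I_n}).

(* [contains_kP3 t h] unfolds to [exists f, P3_packing h f]. *)
Definition P3_packing t h (f : 'I_t * 'I_3 -> 'I_n) : Prop :=
  injective f /\
  forall i, h (f (i, inord 0)) (f (i, inord 1)) /\ h (f (i, inord 1)) (f (i, inord 2)).

Lemma P3_packing_subrel h e t (f : 'I_t * 'I_3 -> 'I_n) :
  subrel h e -> P3_packing h f -> P3_packing e f.
Proof. by move=> he [fi fp]; split=> // i; have [? ?] := fp i; split; apply: he. Qed.

Lemma contains_kP3_subrel h e t : subrel h e -> contains_kP3 t h -> contains_kP3 t e.
Proof. by move=> he [f pf]; exists f; apply: P3_packing_subrel pf. Qed.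

Lemma contains_kP30 h : contains_kP3 0 h.
Proof. by exists (fun p => widen_ord (leq0n n) p.1); split=> [[[]]|[]]. Qed.

Lemma maximal_P3_packing h k : ~ contains_kP3 k h ->
  exists t, [/\ t < k, contains_kP3 t h & ~ contains_kP3 t.+1 h].
Proof.
elim: k => [|k IH] nk; first by case: nk; apply: contains_kP30.
have [ck|nck] := classic (contains_kP3 k h); first by exists k.
by have [t [tk ct nct]] := IH nck; exists t; split=> //; apply: leqW.
Qed.

Lemma ord3_cases (j : 'I_3) : [\/ j = inord 0, j = inord 1 | j = inord 2].
Proof.
case: j => [[|[|[|m]]] lt3] //; [constructor 1 | constructor 2 | constructor 3];
  by apply: val_inj; rewrite /= inordK.
Qed.

Lemma P3_packing_neighbor h t (f : 'I_t * 'I_3 -> 'I_n) p :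
  P3_packing h f -> exists w, h (f p) w || h w (f p).
Proof.
case: p => i j [_ /(_ i) [h01 h12]].
case: (ord3_cases j) => ->;
  [exists (f (i, inord 1)) | exists (f (i, inord 2)) | exists (f (i, inord 1))];
  by rewrite ?h01 ?h12 ?orbT.
Qed.

Lemma P3_packing_extend h t (f : 'I_t * 'I_3 -> 'I_n) a b c :
  P3_packing h f -> uniq [:: a; b; c] -> (forall p, f p \notin [:: a; b; c]) ->
  h a b -> h b c ->
  exists2 g : 'I_t.+1 * 'I_3 -> 'I_n, P3_packing h g &
    forall q, (g q \in [:: a; b; c]) || (g q \in f @: setT).
Proof.
move=> [fi fp] uabc fabc hab hbc.
pose g (q : 'I_t.+1 * 'I_3) : 'I_n :=
  if unlift ord_max q.1 is Some i then f (i, q.2) else nth a [:: a; b; c] q.2.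
have mem_abc (j : 'I_3) : nth a [:: a; b; c] j \in [:: a; b; c] by apply: mem_nth.
exists g; last first.
  by move=> [i j]; rewrite /g /=; case: unliftP => [i'|] _; rewrite ?imset_f ?orbT ?mem_abc.
split=> [[i1 j1] [i2 j2]|i]; rewrite /g /=; last first.
  by case: unliftP => [i'|] _; [apply: fp | rewrite /= !inordK].
case: unliftP => [i1'|] ->; case: unliftP => [i2'|] -> //.
- by move/fi => [-> ->].
- by move=> e1; have := fabc (i1', j1); rewrite e1 mem_abc.
- by move=> e2; have := fabc (i2', j2); rewrite -e2 mem_abc.
- by move/eqP; rewrite nth_uniq // => /eqP/val_inj ->.
Qed.

Lemma contains_kP3S_cherry h t (f : 'I_t * 'I_3 -> 'I_n) v w1 w2 :
  symmetric h -> irreflexive h -> P3_packing h f ->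
  {subset [:: w1; v; w2] <= [predC f @: setT]} -> w1 != w2 -> h v w1 -> h v w2 ->
  contains_kP3 t.+1 h.
Proof.
move=> hs hi pf out w12 hw1 hw2.
have hv (w : 'I_n) : h v w -> v != w by apply: contraTneq => <-; rewrite hi.
have uniq3 : uniq [:: w1; v; w2].
  by rewrite /= !inE negb_or w12 (hv _ hw2) eq_sym (hv _ hw1).
have fout p : f p \notin [:: w1; v; w2].
  by apply/negP => /out; rewrite inE imset_f.
have hw1v : h w1 v by rewrite hs.
have [g pg _] := P3_packing_extend pf uniq3 fout hw1v hw2.
by exists g.
Qed.

Definition deg h v : nat := \sum_w (h v w : nat).
(* The number of edges of [h] when [bipartition h P] holds. *)
Definition bip_edges h P : nat := \sum_(i in P) deg h i.
Definition bipartition h P : Prop := forall i j, h i j -> (i \in P) != (j \in P).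
Definition supported_on h U : Prop := forall i j, h i j -> (i \in U) && (j \in U).
Definition del_vertex h v : rel 'I_n := [rel i j | [&& i != v, j != v & h i j]].

Lemma degE h v : deg h v = #|[set w | h v w]|.
Proof. by rewrite -sum1dep_card big_mkcond; apply: eq_bigr => w _; case: (h v w). Qed.

Lemma bipartition_irr h P : bipartition h P -> irreflexive h.
Proof. by move=> hP i; apply/negP => /hP; rewrite eqxx. Qed.

Lemma bipartitionC h P : bipartition h P -> bipartition h (~: P).
Proof. by move=> hP i j /hP; rewrite !inE; case: (i \in P); case: (j \in P). Qed.

Lemma bipartition_subrel h e P : subrel h e -> bipartition e P -> bipartition h P.
Proof. by move=> he eP i j /he /eP. Qed.

Lemma del_vertex_subrel h v : subrel (del_vertex h v) h.
Proof. by move=> i j /and3P[]. Qed.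

Lemma del_vertex_sym h v : symmetric h -> symmetric (del_vertex h v).
Proof. by move=> hs i j; rewrite /del_vertex /= hs andbCA. Qed.

Lemma handshake h P : symmetric h -> bipartition h P ->
  \sum_i deg h i = 2 * bip_edges h P.
Proof.
move=> hs hP; rewrite (double_sum_cut (P := P) (F := fun i j => (h i j : nat))).
- by rewrite -mulr_natl.
- by move=> i j; rewrite hs.
- by move=> i j ij; case hij: (h i j) => //; move: (hP _ _ hij); rewrite ij eqxx.
Qed.

Lemma bip_edgesC h P : symmetric h -> bipartition h P ->
  bip_edges h P = bip_edges h (~: P).
Proof.
move=> hs hP; apply/eqP.
by rewrite -(@eqn_pmul2l 2) // -!handshake //; apply: bipartitionC.
Qed.

Lemma bip_edges_del_vertex h P v : symmetric h -> bipartition h P ->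
  bip_edges h P = bip_edges (del_vertex h v) P + deg h v.
Proof.
move=> hs; wlog vP : P / v \in P => [W|hP].
  have [|vP] := boolP (v \in P); first exact: W.
  move=> hP; have hvP := bipartition_subrel (@del_vertex_subrel h v) hP.
  rewrite (bip_edgesC hs hP) (bip_edgesC (del_vertex_sym v hs) hvP).
  apply: W (bipartitionC hP).
  by rewrite inE.
rewrite /bip_edges (bigD1 v) //= [in RHS](bigD1 v) //=.
have -> : deg (del_vertex h v) v = 0.
  by rewrite /deg big1 // => w _; rewrite /del_vertex /= eqxx.
rewrite add0n addnC; congr (_ + _).
apply: eq_bigr => i /andP[iP iv]; apply: eq_bigr => w _; rewrite /del_vertex /= iv /=.
have [-> | //] := eqVneq w v.
by case hiv: (h i v) => //; move: (hP _ _ hiv); rewrite iP vP.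
Qed.

Lemma deg_le_side h U P i : supported_on h U -> bipartition h P ->
  (deg h i <= if i \in P then #|U :\: P| else #|U :&: P|).
Proof.
move=> hU hP; rewrite degE; case: ifP => iP; apply/subset_leq_card/subsetP => j;
  rewrite inE => hij; have /andP[_ jU] := hU _ _ hij; have := hP _ _ hij;
  by rewrite iP !inE jU; case: (j \in P).
Qed.

Lemma bip_edges_le h P W D : (forall i j, h i j -> i \in W) ->
  {in P, forall i, deg h i <= D} -> bip_edges h P <= #|W :&: P| * D.
Proof.
move=> hW hD; rewrite -sum_nat_const /bip_edges (bigID (mem W)) /=.
rewrite [X in (_ + X)]big1 => [|i /andP[_ iW]]; last first.
  by rewrite /deg big1 // => j _; case hij: (h i j); rewrite // (hW _ _ hij) in iW.
rewrite addn0 (eq_bigl (fun i => i \in W :&: P)) => [|i]; last by rewrite !inE andbC.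
by apply: leq_sum => i; rewrite inE => /andP[_ /hD].
Qed.

Lemma bip_edges_le_sides h U P : supported_on h U -> bipartition h P ->
  bip_edges h P <= #|U :&: P| * #|U :\: P|.
Proof.
move=> hU hP; apply: bip_edges_le => [i j /hU /andP[] //|i iP].
by have := deg_le_side i hU hP; rewrite iP.
Qed.

Lemma maximal_P3_packing_outside_deg h t (f : 'I_t * 'I_3 -> 'I_n) v :
  symmetric h -> irreflexive h -> P3_packing h f -> ~ contains_kP3 t.+1 h ->
  v \notin f @: setT -> \sum_(w | w \notin f @: setT) (h v w : nat) <= 1.
Proof.
move=> hs hi pf nt vF.
rewrite (eq_bigr (fun w => if h v w then 1 else 0)) => [|w _]; last by case: (h v w).
rewrite -big_mkcondr sum1dep_card; apply/card_le1_eqP => w1 w2.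
rewrite !inE => /andP[w1F hw1] /andP[w2F hw2].
have [// | w12] := eqVneq w1 w2; case: nt.
by apply: (contains_kP3S_cherry hs hi pf _ w12 hw1 hw2) => w; rewrite !inE => /or3P[]/eqP->.
Qed.

Lemma P3free_deg_le1 h v :
  symmetric h -> irreflexive h -> ~ contains_kP3 1 h -> deg h v <= 1.
Proof.
move=> hs hi nc; have [f pf] := contains_kP30 h.
have noF w : w \notin f @: setT by apply/imsetP => [[[[m lt] j] _ _]].
by rewrite /deg -(eq_bigl _ _ noF); apply: maximal_P3_packing_outside_deg (noF v).
Qed.

Lemma complete_bipartite_P3_packing h A B t : [disjoint A & B] ->
  (forall a b, a \in A -> b \in B -> h a b && h b a) ->
  t <= #|A| -> t <= #|B| -> 3 * t <= #|A| + #|B| ->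
  exists2 f : 'I_t * 'I_3 -> 'I_n, P3_packing h f & forall p, f p \in A :|: B.
Proof.
elim: t A B => [|t IH] A B dAB hAB tA tB t3.
  by have [f pf] := contains_kP30 h; exists f => // [[[]]].
wlog BA : A B dAB hAB tA tB t3 / (#|B| <= #|A|) => [W|].
  have [|/ltnW AB] := leqP #|B| #|A|; first exact: W.
  have [|||f pf fBA] := W B A _ _ tB tA _ AB.
  - by rewrite disjoint_sym.
  - by move=> b a bB aA; rewrite andbC hAB.
  - by rewrite addnC.
  - by exists f => // p; rewrite setUC.
have /card_gt1P [a1 [a2 [a1A a2A a12]]] : 1 < #|A| by lia.
have /card_gt0P [b bB] : 0 < #|B| by lia.
set A' := A :\: [set a1; a2]; set B' := B :\ b.
have cA' : #|A'| = #|A| - 2.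
  by rewrite cardsDS ?cards2 ?a12 //; apply/subsetP => x; rewrite !inE => /orP[]/eqP->.
have cB' : #|B'| = #|B| - 1 by rewrite (cardsD1 b B) bB add1n subn1.
have [f pf fA'B'] :
    exists2 f : 'I_t * 'I_3 -> 'I_n, P3_packing h f & forall p, f p \in A' :|: B'.
  apply: IH; rewrite ?cA' ?cB'; try lia.
  - by apply: disjointW dAB; apply: subsetDl.
  - by move=> a b' /setDP[aA _] /setD1P[_ b'B]; apply: hAB.
have ne_ab a : a \in A -> a != b.
  by move=> aA; apply: contraTneq aA => ->; rewrite (disjointFl dAB bB).
have uniq3 : uniq [:: a1; b; a2].
  by rewrite /= !inE negb_or ne_ab // a12 eq_sym ne_ab.
have out p : f p \notin [:: a1; b; a2].
  apply/negP; rewrite !inE => /or3P[]/eqP fpE; move: (fA'B' p); rewrite fpE !inE eqxx ?orbT /=.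
  - by rewrite (disjointFr dAB a1A) andbF.
  - by rewrite (disjointFl dAB bB) !andbF.
  - by rewrite (disjointFr dAB a2A) andbF.
have /andP[ha1b _] := hAB _ _ a1A bB; have /andP[_ hba2] := hAB _ _ a2A bB.
have [g pg gim] := P3_packing_extend pf uniq3 out ha1b hba2.
exists g => // q; have /orP[|/imsetP[p _ ->]] := gim q.
  by rewrite !inE => /or3P[]/eqP->; rewrite ?a1A ?bB ?a2A ?orbT.
by move: (fA'B' p); rewrite !inE => /orP[/andP[_ ->]|/andP[_ ->]]; rewrite ?orbT.
Qed.

Lemma sum_ord3_le2 (g : 'I_3 -> bool) j0 : g j0 = false -> \sum_j (g j : nat) <= 2.
Proof.
move=> g0; rewrite (bigD1 j0) //= g0 add0n.
apply: leq_trans (_ : \sum_(j | j != j0) 1 <= 2); first by apply: leq_sum => j _; case: (g j).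
by rewrite sum1dep_card (eq_card (B := predC1 j0)) ?cardC1 ?card_ord // => j; rewrite !inE.
Qed.

Lemma P3_packing_nbhd_le h P t (f : 'I_t * 'I_3 -> 'I_n) v :
  bipartition h P -> P3_packing h f -> #|[set w | h v w] :&: f @: setT| <= 2 * t.
Proof.
move=> hP [_ fp]; set N := [set w | h v w].
have no_triangle a b : h v a -> h v b -> h a b -> False.
  move=> /hP + /hP + /hP.
  by case: (v \in P); case: (a \in P); case: (b \in P).
have sub : N :&: f @: setT \subset f @: [set p | f p \in N].
  apply/subsetP => w /setIP[wN /imsetP[p _ wE]].
  by rewrite wE imset_f // inE -wE.
apply: leq_trans (subset_leq_card sub) _; apply: leq_trans (leq_imset_card _ _) _.
have -> : #|[set p | f p \in N]| = \sum_i \sum_j (f (i, j) \in N : nat).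
  rewrite -sum1dep_card pair_big big_mkcond.
  by apply: eq_bigr => [[i j]] _; case: (f (i, j) \in N).
rewrite mulnC -[t in (t * 2)]card_ord -sum_nat_const; apply: leq_sum => i _.
have [f1N|/negbTE f1N] := boolP (f (i, inord 1) \in N); last exact: sum_ord3_le2 f1N.
apply: (sum_ord3_le2 (j0 := inord 0)); apply/negP => f0N.
by move: f0N f1N; rewrite !inE => f0N f1N; apply: (no_triangle _ _ f0N f1N); case: (fp i).
Qed.

Lemma contains_kP3S_high_deg h P t v : symmetric h -> bipartition h P ->
  2 * t + 2 <= deg h v -> contains_kP3 t (del_vertex h v) -> contains_kP3 t.+1 h.
Proof.
move=> hs hP dv [f pf]; have pfh := P3_packing_subrel (@del_vertex_subrel h v) pf.
set F := f @: setT; set N := [set w | h v w].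
have vF : v \notin F.
  apply/imsetP => [[p _ vE]]; have [w] := P3_packing_neighbor p pf.
  by rewrite -vE /del_vertex /= eqxx /= andbF.
have /card_gt1P [w1 [w2 [w1N w2N w12]]] : 1 < #|N :\: F|.
  by rewrite cardsD; move: dv (P3_packing_nbhd_le v hP pfh); rewrite degE -/N -/F; lia.
move: w1N w2N; rewrite !inE => /andP[w1F hw1] /andP[w2F hw2].
apply: (contains_kP3S_cherry hs (bipartition_irr hP) pfh _ w12 hw1 hw2) => w.
by rewrite !inE => /or3P[]/eqP->.
Qed.

Lemma bip_edges_maximal_packing h U P t (f : 'I_t * 'I_3 -> 'I_n) D :
  symmetric h -> supported_on h U -> bipartition h P ->
  P3_packing h f -> ~ contains_kP3 t.+1 h -> (forall v, deg h v <= D) ->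
  2 * bip_edges h P <= 2 * (3 * t * D) + (#|U| - 3 * t).
Proof.
move=> hs hU hP pf nt hD; set F := f @: setT.
have cF : #|F| = 3 * t.
  by rewrite card_imset; [rewrite cardsT card_prod !card_ord mulnC | case: pf].
have FU : F \subset U.
  apply/subsetP => _ /imsetP[p _ ->]; have [w] := P3_packing_neighbor p pf.
  by case/orP => /hU /andP[].
have degF : \sum_(i in F) deg h i <= 3 * t * D.
  by rewrite -cF -sum_nat_const; apply: leq_sum => i _.
have into_F : \sum_(i | i \notin F) \sum_(j in F) h i j <= 3 * t * D.
  apply: leq_trans degF; rewrite exchange_big /=; apply: leq_sum => j _.
  under eq_bigr do rewrite hs.
  by rewrite /deg [X in (_ <= X)](bigID (mem F)) /= leq_addl.
have outside_F : \sum_(i | i \notin F) \sum_(j | j \notin F) h i j <= #|U| - 3 * t.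
  rewrite -cF -cardsDS // -sum1_card big_mkcond [X in (_ <= X)]big_mkcond /=.
  apply: leq_sum => i _; rewrite !inE; have [iF|] //= := boolP (i \notin F).
  have [iU|iU] := boolP (i \in U).
    exact: maximal_P3_packing_outside_deg hs (bipartition_irr hP) pf nt iF.
  rewrite big1 // => j _; case hij: (h i j) => //.
  by have /andP[] := hU _ _ hij; rewrite (negPf iU).
have split_deg i : deg h i = \sum_(j in F) h i j + \sum_(j | j \notin F) h i j.
  by rewrite /deg (bigID (mem F)).
rewrite -(handshake hs hP) (bigID (mem F)) /=.
rewrite [X in _ + X](eq_bigr _ (fun i _ => split_deg i)) big_split /= mul2n -addnn -addnA.
exact: leq_add degF (leq_add into_F outside_F).
Qed.

Lemma bip_edges_P3free_del_vertex h U P v :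
  symmetric h -> supported_on h U -> bipartition h P -> v \in U ->
  ~ contains_kP3 1 (del_vertex h v) -> bip_edges h P <= #|U| - 1.
Proof.
move=> hs; wlog vP : P / v \in P => [W hU hP|hU hP vU nc].
  have [vP|vP] := boolP (v \in P); first exact: W.
  by rewrite (bip_edgesC hs hP); apply: (W _ _ hU (bipartitionC hP)); rewrite inE.
have hvP := bipartition_subrel (@del_vertex_subrel h v) hP.
have le1 : bip_edges (del_vertex h v) P <= #|(U :\ v) :&: P| * 1.
  apply: bip_edges_le => [i j /and3P[iv _ /hU /andP[iU _]]|i _]; first by rewrite !inE iv.
  exact: P3free_deg_le1 (del_vertex_sym v hs) (bipartition_irr hvP) nc.
have := deg_le_side v hU hP; rewrite vP (bip_edges_del_vertex v hs hP) => dv.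
have : #|U :&: P| = #|(U :\ v) :&: P|.+1.
  by rewrite setIDAC (cardsD1 v (U :&: P)) !inE vU vP.
have := cardsID P U; lia.
Qed.

Lemma bip_edges_small_side h U P k : supported_on h U -> bipartition h P ->
  2 * k <= #|U| -> (#|U :&: P| <= k) || (#|U :\: P| <= k) ->
  bip_edges h P <= k * (#|U| - k).
Proof.
move=> hU hP Uk small; apply: leq_trans (bip_edges_le_sides hU hP) _.
by have := cardsID P U; case/orP: small; nia.
Qed.

Lemma low_degree_arith m t K u : 0 < K -> t <= K -> 11 * K + 7 <= u ->
  2 * m <= 2 * (3 * t * (2 * K + 1)) + (u - 3 * t) -> m <= K * (u - K).
Proof. by move=> *; nia. Qed.

Lemma bip_edges_kP3free K h U P : 0 < K -> symmetric h -> supported_on h U ->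
  bipartition h P -> ~ contains_kP3 K.+1 h -> 11 * K + 7 <= #|U| ->
  bip_edges h P <= K * (#|U| - K).
Proof.
elim: K h U => // K IH h U _ hs hU hP nK uK.
have [small|] := boolP ((#|U :&: P| <= K.+1) || (#|U :\: P| <= K.+1)).
  by apply: bip_edges_small_side => //; lia.
rewrite negb_or -!ltnNge => /andP[pK qK]; have pq := cardsID P U.
have [[v dv]|low] := classic (exists v, 2 * K.+1 + 2 <= deg h v); last first.
  have [t [tK ct nt]] := maximal_P3_packing nK; case: ct => f pf.
  have hD v : deg h v <= 2 * K.+1 + 1.
    by rewrite leqNgt; apply/negP => d; apply: low; exists v; lia.
  exact: low_degree_arith uK (bip_edges_maximal_packing hs hU hP pf nt hD).
have nKv : ~ contains_kP3 K.+1 (del_vertex h v).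
  by move=> c; apply: nK; apply: contains_kP3S_high_deg hs hP dv c.
have vU : v \in U.
  have /card_gt0P[w] : 0 < #|[set w | h v w]| by rewrite -degE; lia.
  by rewrite inE => /hU /andP[].
have dvb : deg h v <= #|U| - K.+2 by have := deg_le_side v hU hP; case: (v \in P); lia.
have [K0 | K0] := posnP K.
  by subst K; apply: leq_trans (bip_edges_P3free_del_vertex hs hU hP vU nKv) _; lia.
have hvU : supported_on (del_vertex h v) (U :\ v).
  by move=> i j /and3P[iv jv /hU /andP[iU jU]]; rewrite !inE iv jv iU jU.
have cUv : #|U :\ v| = #|U|.-1 by rewrite (cardsD1 v U) vU.
have hvP := bipartition_subrel (@del_vertex_subrel h v) hP.
have := IH _ _ K0 (del_vertex_sym v hs) hvU hvP nKv.
rewrite cUv (bip_edges_del_vertex v hs hP) => /(_ ltac:(lia)); nia.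
Qed.

Lemma complete_bipartite_sizes e k A B : 2 <= k -> 11 * k - 4 <= n ->
  [disjoint A & B] -> (forall a b, a \in A -> b \in B -> e a b && e b a) ->
  ~ contains_kP3 k e -> #|A| * #|B| = (k - 1) * (n - k + 1) ->
  (#|A| = k - 1 /\ #|B| = n - k + 1) \/ (#|B| = k - 1 /\ #|A| = n - k + 1).
Proof.
move=> k2 kn dAB eAB nk AB.
have ABn : #|A| + #|B| <= n.
  by rewrite -cardsUI (disjoint_setI0 dAB) cards0 addn0 -[X in (_ <= X)]card_ord max_card.
have [kA|Ak] := leqP k #|A|; have [kB|Bk] := leqP k #|B|.
- case: nk; have [|f pf _] := complete_bipartite_P3_packing dAB eAB kA kB; first nia.
  by exists f.
- by right; split; nia.
- by left; split; nia.
- by exfalso; nia.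
Qed.

End Packings.

(** * Quadratic forms and the least eigenvalue *)

Local Open Scope ring_scope.

Lemma cauchy_schwarz (R : realFieldType) (I : finType) (Q : pred I) (a b : I -> R) :
  (\sum_(i | Q i) a i * b i) ^+ 2 <= (\sum_(i | Q i) a i ^+ 2) * (\sum_(i | Q i) b i ^+ 2).
Proof.
set A := \sum_(i | Q i) a i ^+ 2; set B := \sum_(i | Q i) b i ^+ 2.
set C := \sum_(i | Q i) a i * b i.
have sum2 (F G : I -> R) : \sum_(i | Q i) \sum_(j | Q j) F i * G j =
    (\sum_(i | Q i) F i) * (\sum_(j | Q j) G j).
  by rewrite mulr_suml; apply: eq_bigr => i _; rewrite mulr_sumr.
have lagrange :
    \sum_(i | Q i) \sum_(j | Q j) (a i * b j - a j * b i) ^+ 2 = (A * B - C ^+ 2) *+ 2.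
  transitivity (\sum_(i | Q i) \sum_(j | Q j) (a i ^+ 2 * b j ^+ 2 + b i ^+ 2 * a j ^+ 2
                 - (a i * b i) * (a j * b j) *+ 2)).
    by apply: eq_bigr => i _; apply: eq_bigr => j _; ring.
  under eq_bigr do rewrite sumrB big_split /= sumrMnl.
  by rewrite sumrB big_split /= sumrMnl !sum2 -/A -/B -/C; ring.
have : 0 <= \sum_(i | Q i) \sum_(j | Q j) (a i * b j - a j * b i) ^+ 2.
  by apply: sumr_ge0 => i _; apply: sumr_ge0 => j _; apply: sqr_ge0.
by rewrite lagrange pmulrn_lge0 // subr_ge0.
Qed.

Lemma cauchy_am_gm_le (R : realFieldType) (T S U V m c : R) :
  0 <= S -> S <= U * V -> 0 <= U -> 0 <= V -> 0 <= m -> m <= c ^+ 2 -> 0 <= c ->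
  T ^+ 2 <= m * S -> 2 * T <= c * (U + V).
Proof.
move=> S0 SUV U0 V0 m0 mc c0 TS.
have : (2 * T) ^+ 2 <= (c * (U + V)) ^+ 2.
  have : 0 <= c ^+ 2 * (U - V) ^+ 2 by rewrite mulr_ge0 ?sqr_ge0.
  have : m * S <= c ^+ 2 * (U * V) by rewrite ler_pM // ?sqr_ge0.
  nra.
have : 0 <= c * (U + V) by rewrite mulr_ge0 ?addr_ge0.
nra.
Qed.

Lemma cauchy_am_gm_eq (R : realFieldType) (T S U V m c : R) :
  S <= U * V -> 0 <= U -> 0 <= V -> 0 <= m -> m <= c ^+ 2 -> 0 < c ->
  T ^+ 2 <= m * S -> 2 * T = c * (U + V) -> 0 < U + V -> m = c ^+ 2 /\ S = U * V.
Proof.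
move=> SUV U0 V0 m0 mc c0 TS eqT UVs.
have mS : m * S <= m * (U * V) by rewrite ler_wpM2l.
have mUV : m * (U * V) <= c ^+ 2 * (U * V) by rewrite ler_wpM2r ?mulr_ge0.
have sq : c ^+ 2 * (U + V) ^+ 2 = 4 * T ^+ 2 by rewrite -exprMn -eqT; ring.
have amgm : c ^+ 2 * (U + V) ^+ 2 - 4 * (c ^+ 2 * (U * V)) = (c * (U - V)) ^+ 2 by ring.
have sq_ge0 := sqr_ge0 (c * (U - V)).
have tight : c ^+ 2 * (U * V) <= m * (U * V) by lra.
have UV0 : 0 < U * V.
  have /eqP : (c * (U - V)) ^+ 2 = 0 by lra.
  rewrite sqrf_eq0 mulf_eq0 gt_eqF //= subr_eq0 => /eqP UV.
  by rewrite -UV in UVs *; apply: mulr_gt0; lra.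
have mE : m = c ^+ 2 by apply: (mulIf (lt0r_neq0 UV0)); lra.
split=> //; apply: (mulfI (lt0r_neq0 (exprn_gt0 2 c0))); rewrite -mE; lra.
Qed.

Section LeastEigenvalue.
Variables (R : rcfType) (n : nat).
Implicit Types (A : 'M[R]_n) (x : 'I_n -> R).

Definition qform A x : R := \sum_i \sum_j x i * A i j * x j.
Definition sqnorm x : R := \sum_i x i ^+ 2.

Lemma sqnorm_gt0 x i : x i != 0 -> 0 < sqnorm x.
Proof.
move=> xi; rewrite /sqnorm (bigD1 i) //=.
have : 0 < x i ^+ 2 by rewrite exprn_even_gt0.
have : 0 <= \sum_(j | j != i) x j ^+ 2 by apply: sumr_ge0 => j _; apply: sqr_ge0.
lra.
Qed.

Lemma root_char_poly_qform A l : root (char_poly A) l ->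
  exists2 x, 0 < sqnorm x & qform A x = l * sqnorm x.
Proof.
rewrite -eigenvalue_root_char => /eigenvalueP [v vA v0].
have [i vi] : exists i, v 0 i != 0.
  apply/existsP; apply: contraNT v0 => /existsPn v0.
  by apply/eqP/rowP => i; rewrite mxE; move: (v0 i); rewrite negbK => /eqP.
exists (v 0); first exact: sqnorm_gt0 vi.
have vAj j : \sum_i v 0 i * A i j = l * v 0 j.
  by have := congr1 (fun w : 'rV_n => w 0 j) vA; rewrite !mxE.
rewrite /qform exchange_big /sqnorm mulr_sumr; apply: eq_bigr => j _.
by rewrite -mulr_suml vAj -mulrA -expr2.
Qed.

(* [least_eigenvalue A] defaults to 0 when [char_poly A] has no real root. *)
Lemma least_eigenvalue_root A :
  least_eigenvalue A = 0 \/ root (char_poly A) (least_eigenvalue A).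
Proof.
rewrite /least_eigenvalue; case E: (rootsR _) => [|l s] /=; [by left | right].
have : l \in rootsR (char_poly A) by rewrite E mem_head.
exact: root_roots.
Qed.

Lemma least_eigenvalue_le A l : root (char_poly A) l -> least_eigenvalue A <= l.
Proof.
move=> rl; have nz : char_poly A != 0 by apply/monic_neq0/char_poly_monic.
have : l \in rootsR (char_poly A) by apply: root_roots_on (roots_on_rootsR nz) _ _ rl.
have : sorted <%R (rootsR (char_poly A)) by apply: sorted_roots.
rewrite /least_eigenvalue; case: rootsR => // a s /= /(order_path_min lt_trans) /allP als.
by rewrite inE => /orP[/eqP -> //|/als /ltW].
Qed.

Lemma least_eigenvalue_ge A b : b <= 0 -> (forall x, b * sqnorm x <= qform A x) ->
  b <= least_eigenvalue A.
Proof.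
move=> b0 bq; have [-> //|rl] := least_eigenvalue_root A.
have [x x0 qx] := root_char_poly_qform rl.
by rewrite -(ler_pM2r x0) -qx.
Qed.

End LeastEigenvalue.

(** * The sign-change subgraph of a vector *)

Section SignChange.
Variables (R : rcfType) (n : nat) (e : rel 'I_n) (x : 'I_n -> R).
Hypothesis e_sym : symmetric e.

Definition sign_change : rel 'I_n := [rel i j | e i j && (x i * x j < 0)].
Definition posv : {set 'I_n} := [set i | 0 < x i].
Definition negv : {set 'I_n} := [set i | x i < 0].

Definition cross_sum : R := \sum_(i in posv) \sum_j (sign_change i j)%:R * `|x i * x j|.
Definition cross_sqsum : R := \sum_(i in posv) \sum_j (sign_change i j)%:R * (x i * x j) ^+ 2.
Definition same_sign_sum : R := \sum_i \sum_j (e i j && (0 <= x i * x j))%:R * (x i * x j).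
Definition pos_mass : R := \sum_(i in posv) x i ^+ 2.
Definition nonpos_mass : R := \sum_(i in ~: posv) x i ^+ 2.

Lemma sign_change_subrel : subrel sign_change e.
Proof. by move=> i j /andP[]. Qed.

Lemma sign_change_sym : symmetric sign_change.
Proof. by move=> i j; rewrite /sign_change /= e_sym mulrC. Qed.

Lemma sign_change_bip : bipartition sign_change posv.
Proof.
move=> i j /andP[_]; rewrite !inE.
case: (ltrgt0P (x i)) => xi.
- by rewrite pmulr_rlt0 // => xj; rewrite ltNge (ltW xj).
- by rewrite nmulr_rlt0 // => ->.
- by rewrite xi mul0r ltxx.
Qed.

Lemma qform_adjmx_split : qform (adjmx R e) x = same_sign_sum - cross_sum *+ 2.
Proof.
have split_term i j : x i * (adjmx R e) i j * x j =
    (e i j && (0 <= x i * x j))%:R * (x i * x j) - (sign_change i j)%:R * `|x i * x j|.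
  rewrite /adjmx mxE /sign_change /=; case: (e i j) => /=; last by rewrite mulr0 !mul0r subr0.
  rewrite mulr1; case: ltrP => xx; first by rewrite ltr0_norm // mul0r mul1r sub0r opprK.
  by rewrite mul1r mul0r subr0.
rewrite /qform (eq_bigr _ (fun i _ => eq_bigr _ (fun j _ => split_term i j))).
under eq_bigr do rewrite sumrB; rewrite sumrB; congr (_ - _).
rewrite /cross_sum; apply: double_sum_cut => [i j|i j ij].
  by rewrite sign_change_sym (mulrC (x i)).
case hij: (sign_change i j); last by rewrite mul0r.
by move: (sign_change_bip hij); rewrite ij eqxx.
Qed.

Lemma same_sign_sum_ge0 : 0 <= same_sign_sum.
Proof.
apply: sumr_ge0 => i _; apply: sumr_ge0 => j _.
case: (e i j) => /=; last by rewrite mul0r.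
by case: (leP 0 (x i * x j)) => xx; rewrite ?mul0r ?mul1r.
Qed.

Lemma cross_sqsum_ge0 : 0 <= cross_sqsum.
Proof. by apply: sumr_ge0 => i _; apply: sumr_ge0 => j _; rewrite mulr_ge0 ?sqr_ge0. Qed.

Lemma pos_mass_ge0 : 0 <= pos_mass.
Proof. by apply: sumr_ge0 => i _; apply: sqr_ge0. Qed.

Lemma nonpos_mass_ge0 : 0 <= nonpos_mass.
Proof. by apply: sumr_ge0 => i _; apply: sqr_ge0. Qed.

Lemma sqnorm_split : sqnorm x = pos_mass + nonpos_mass.
Proof.
rewrite /sqnorm /pos_mass /nonpos_mass (bigID (mem posv)) /=.
by congr (_ + _); apply: eq_bigl => i; rewrite !inE.
Qed.

Lemma cross_sum_sq_le : cross_sum ^+ 2 <= (bip_edges sign_change posv)%:R * cross_sqsum.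
Proof.
pose Q := [pred p : 'I_n * 'I_n | p.1 \in posv].
pose a p : R := (sign_change p.1 p.2)%:R.
pose b p := a p * `|x p.1 * x p.2|.
have pairs F : \sum_(i in posv) \sum_j F i j = \sum_(p | Q p) F p.1 p.2 :> R.
  by rewrite pair_big_dep; apply: eq_bigl => p; rewrite andbT.
have -> : cross_sum = \sum_(p | Q p) a p * b p.
  rewrite /cross_sum pairs; apply: eq_bigr => p _.
  by rewrite /b /a; case: sign_change; rewrite ?mul1r ?mul0r.
have -> : (bip_edges sign_change posv)%:R = \sum_(p | Q p) a p ^+ 2.
  rewrite natr_sum (eq_bigr _ (fun i _ => natr_sum _ _ _ _)) pairs.
  by apply: eq_bigr => p _; rewrite /a; case: sign_change; rewrite ?expr1n ?expr0n.
have -> : cross_sqsum = \sum_(p | Q p) b p ^+ 2.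
  rewrite /cross_sqsum pairs; apply: eq_bigr => p _.
  rewrite /b /a [RHS]exprMn real_normK ?num_real //.
  by case: sign_change; rewrite ?expr1n ?expr0n.
exact: cauchy_schwarz.
Qed.

Lemma cross_sqsum_gap : pos_mass * nonpos_mass - cross_sqsum =
  \sum_(i in posv) \sum_(j in ~: posv) (1 - (sign_change i j)%:R) * (x i * x j) ^+ 2.
Proof.
rewrite /pos_mass /nonpos_mass /cross_sqsum mulr_suml -sumrB; apply: eq_bigr => i iP.
rewrite mulr_sumr [X in _ - X](bigID (mem (~: posv))) /=.
rewrite [X in _ - (_ + X)]big1 ?addr0 => [|j]; last first.
  rewrite inE negbK => jP; case hij: (sign_change i j); last by rewrite mul0r.
  by move: (sign_change_bip hij); rewrite iP jP.
by rewrite -sumrB; apply: eq_bigr => j _; rewrite exprMn; ring.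
Qed.

Lemma sign_change_gap_ge0 i j : 0 <= (1 - (sign_change i j)%:R) * (x i * x j) ^+ 2 :> R.
Proof. by rewrite mulr_ge0 ?sqr_ge0 // subr_ge0; case: sign_change. Qed.

Lemma cross_sqsum_le : cross_sqsum <= pos_mass * nonpos_mass.
Proof.
rewrite -subr_ge0 cross_sqsum_gap.
by apply: sumr_ge0 => i _; apply: sumr_ge0 => j _; apply: sign_change_gap_ge0.
Qed.

Lemma cross_sqsum_eq_complete : cross_sqsum = pos_mass * nonpos_mass ->
  forall i j, 0 < x i -> x j < 0 -> sign_change i j.
Proof.
move=> eq_mass i j xi xj.
have iP : i \in posv by rewrite inE.
have jP : j \in ~: posv by rewrite !inE -leNgt ltW.
have gap0 := esym cross_sqsum_gap; rewrite eq_mass subrr in gap0.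
have gap_row_ge0 k :
    0 <= \sum_(l in ~: posv) (1 - (sign_change k l)%:R) * (x k * x l) ^+ 2 :> R.
  by apply: sumr_ge0 => l _; apply: sign_change_gap_ge0.
have row0 := psumr_eq0P (fun k _ => gap_row_ge0 k) gap0 iP.
have /eqP := psumr_eq0P (fun l _ => sign_change_gap_ge0 i l) row0 jP.
rewrite mulf_eq0 sqrf_eq0 mulf_eq0 (gt_eqF xi) (lt_eqF xj) orbF subr_eq0.
by case: (sign_change i j); rewrite ?oner_eq0.
Qed.

Lemma same_sign_sum_eq0 : same_sign_sum = 0 -> forall i j, e i j -> x i * x j <= 0.
Proof.
move=> S0 i j eij; rewrite leNgt; apply/negP => xx.
have term_ge0 k l : 0 <= (e k l && (0 <= x k * x l))%:R * (x k * x l) :> R.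
  by case: (e k l) (leP 0 (x k * x l)) => [] [] /=; rewrite ?mul0r ?mul1r.
have row0 := psumr_eq0P (fun k _ => sumr_ge0 _ (fun l _ => term_ge0 k l)) S0.
have /(_ j isT)/eqP := psumr_eq0P (fun l _ => term_ge0 i l) (row0 i isT).
by rewrite eij (ltW xx) mul1r (gt_eqF xx).
Qed.

Lemma qform_adjmx_ge c : 0 <= c -> (bip_edges sign_change posv)%:R <= c ^+ 2 ->
  - c * sqnorm x <= qform (adjmx R e) x.
Proof.
move=> c0 mc; have := cauchy_am_gm_le cross_sqsum_ge0 cross_sqsum_le pos_mass_ge0
  nonpos_mass_ge0 (ler0n _ _) mc c0 cross_sum_sq_le.
rewrite qform_adjmx_split sqnorm_split mulr2n; have := same_sign_sum_ge0; lra.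
Qed.

Lemma qform_adjmx_eq c : 0 < c -> (bip_edges sign_change posv)%:R <= c ^+ 2 ->
  0 < sqnorm x -> qform (adjmx R e) x = - c * sqnorm x ->
  [/\ (bip_edges sign_change posv)%:R = c ^+ 2, same_sign_sum = 0
    & forall i j, 0 < x i -> x j < 0 -> sign_change i j].
Proof.
move=> c0 mc x0; have := cauchy_am_gm_le cross_sqsum_ge0 cross_sqsum_le pos_mass_ge0
  nonpos_mass_ge0 (ler0n _ _) mc (ltW c0) cross_sum_sq_le.
rewrite qform_adjmx_split sqnorm_split mulr2n in x0 * => le2T qx.
have S_ge0 := same_sign_sum_ge0.
have S0 : same_sign_sum = 0 by lra.
have T2 : 2 * cross_sum = c * (pos_mass + nonpos_mass) by lra.
have [mE SE] := cauchy_am_gm_eq cross_sqsum_le pos_mass_ge0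
  nonpos_mass_ge0 (ler0n _ _) mc c0 cross_sum_sq_le T2 x0.
by split=> //; apply: cross_sqsum_eq_complete.
Qed.

Lemma bip_edges_sign_change_complete :
  (forall i j, 0 < x i -> x j < 0 -> sign_change i j) ->
  bip_edges sign_change posv = (#|posv| * #|negv|)%N.
Proof.
move=> cross; rewrite -sum_nat_const; apply: eq_bigr => i; rewrite inE => xi.
rewrite degE; apply: eq_card => j; rewrite !inE.
apply/andP/idP => [[_]|xj]; first by rewrite pmulr_rlt0.
by split; [case/andP: (cross _ _ xi xj) | rewrite pmulr_rlt0].
Qed.

Lemma edge_sign_pattern : same_sign_sum = 0 -> (forall i, x i != 0) ->
  (forall i j, 0 < x i -> x j < 0 -> sign_change i j) ->
  forall i j, e i j = ((0 < x i) != (0 < x j)).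
Proof.
move=> S0 x0 cross i j; apply/idP/idP => [eij|].
  have := same_sign_sum_eq0 S0 eij.
  rewrite le_eqVlt mulf_eq0 (negPf (x0 i)) (negPf (x0 j)) /=.
  case: (ltrgt0P (x i)) (x0 i) => [xi _|xi _|//].
    by rewrite pmulr_rlt0 // => xj; rewrite (lt_gtF xj).
  by rewrite nmulr_rlt0 // => ->.
case: (ltrgt0P (x i)) (x0 i) => [xi _|xi _|//].
- case: (ltrgt0P (x j)) (x0 j) => [//|xj _ _|//].
  by case/andP: (cross _ _ xi xj).
- case: (ltrgt0P (x j)) (x0 j) => [xj _ _|//|//].
  by rewrite e_sym; case/andP: (cross _ _ xj xi).
Qed.

End SignChange.

Lemma complete_bipartite_eigenvalue (R : rcfType) n (e : rel 'I_n) a : (0 < a < n)%N ->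
  is_complete_bipartite a e -> root (char_poly (adjmx R e)) (- Num.sqrt (a * (n - a))%:R).
Proof.
move=> /andP[a0 an] [S [cS eS]].
set sa : R := Num.sqrt a%:R; set sb : R := Num.sqrt (n - a)%:R.
have sa2 : sa * sa = a%:R by rewrite -expr2 sqr_sqrtr.
have sb2 : sb * sb = (n - a)%:R by rewrite -expr2 sqr_sqrtr.
have cSc : #|[pred i | i \notin S]| = (n - a)%N.
  transitivity #|~: S|; first by apply: eq_card => i; rewrite !inE.
  by rewrite cardsCs setCK card_ord cS.
pose v : 'rV[R]_n := \row_i (if i \in S then sb else - sa).
rewrite natrM sqrtrM // -/sa -/sb -eigenvalue_root_char; apply/eigenvalueP; exists v.
  apply/rowP => j; rewrite !mxE; under eq_bigr do rewrite !mxE eS.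
  rewrite (bigID (mem S)) /=; case jS: (j \in S).
    rewrite big1 ?add0r => [|i iS]; last by rewrite iS mulr0.
    under eq_bigr => i iS do rewrite (negPf iS) mulr1.
    by rewrite sumr_const cSc -mulr_natr -sb2; ring.
  rewrite [X in _ + X]big1 ?addr0 => [|i /negPf ->]; last by rewrite mulr0.
  under eq_bigr => i iS do rewrite iS mulr1.
  by rewrite sumr_const cS -mulr_natr -sa2; ring.
have /card_gt0P [i0 i0S] : (0 < #|S|)%N by rewrite cS.
apply/negP => /eqP /rowP /(_ i0); rewrite !mxE i0S => /eqP.
by rewrite sqrtr_eq0 leNgt ltr0n subn_gt0 an.
Qed.

Section KP3FreeGraphs.
Variables (R : rcfType) (k n : nat) (e : rel 'I_n).
Hypotheses (e_simple : simple_graph e) (k_ge2 : (2 <= k)%N) (n_large : (11 * k - 4 <= n)%N)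
  (no_kP3 : ~ contains_kP3 k e).

Let e_sym : symmetric e. Proof. by case: e_simple. Qed.
Local Notation c := (Num.sqrt ((k - 1) * (n - k + 1))%:R : R).

Lemma kP3free_sign_change_edges (x : 'I_n -> R) :
  (bip_edges (sign_change e x) (posv x))%:R <= c ^+ 2.
Proof.
have nK : ~ contains_kP3 (k - 1).+1 (sign_change e x).
  by rewrite subn1 prednK; [move/(contains_kP3_subrel (@sign_change_subrel _ _ e x)) | lia].
have all_in : supported_on (sign_change e x) setT by move=> i j _; rewrite !in_setT.
have := bip_edges_kP3free _ (sign_change_sym x e_sym) all_in (@sign_change_bip _ _ e x) nK.
rewrite cardsT card_ord sqr_sqrtr // ler_nat => /(_ ltac:(lia) ltac:(lia)).
by move/leq_trans; apply; rewrite (_ : n - (k - 1) = n - k + 1)%N; lia.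
Qed.

Lemma kP3free_qform_ge (x : 'I_n -> R) : - c * sqnorm x <= qform (adjmx R e) x.
Proof. exact (qform_adjmx_ge e_sym (sqrtr_ge0 _) (kP3free_sign_change_edges x)). Qed.

Lemma kP3free_qform_eq (x : 'I_n -> R) : 0 < sqnorm x ->
  qform (adjmx R e) x = - c * sqnorm x -> is_complete_bipartite (k - 1) e.
Proof.
move=> x0 qx; have c0 : 0 < c by rewrite sqrtr_gt0 ltr0n muln_gt0 subn_gt0 addn1 k_ge2.
have [mE S0 cross] := qform_adjmx_eq e_sym c0 (kP3free_sign_change_edges x) x0 qx.
have PN : (#|posv x| * #|negv x| = (k - 1) * (n - k + 1))%N.
  apply/eqP; rewrite -(eqr_nat R) -(bip_edges_sign_change_complete cross) mE sqr_sqrtr //.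
have dPN : [disjoint posv x & negv x].
  by rewrite disjoints_subset; apply/subsetP => i; rewrite !inE => xi; rewrite -leNgt ltW.
have ePN a b : a \in posv x -> b \in negv x -> e a b && e b a.
  by rewrite !inE => xa xb; rewrite [e b a]e_sym andbb; case/andP: (cross _ _ xa xb).
have sizes := complete_bipartite_sizes k_ge2 n_large dPN ePN no_kP3 PN.
have x_neq0 i : x i != 0.
  have : posv x :|: negv x = setT.
    apply/eqP; rewrite eqEcard subsetT cardsT card_ord cardsU (disjoint_setI0 dPN) cards0 subn0.
    by case: sizes => -[-> ->]; lia.
  by move/setP/(_ i); rewrite !inE; case: ltrgt0P.
have adjE := edge_sign_pattern e_sym S0 x_neq0 cross.
case: sizes => -[sizeP _].
  by exists (posv x); split=> // i j; rewrite adjE !inE.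
exists (negv x); split=> // i j; rewrite adjE !inE.
by case: (ltrgt0P (x i)) (x_neq0 i) => // _ _; case: (ltrgt0P (x j)) (x_neq0 j).
Qed.

End KP3FreeGraphs.

Unset Implicit Arguments.

Theorem mainTheorem4 (R : rcfType) (k n : nat) (e : rel 'I_n) :
  simple_graph e ->
  (2 <= k)%N ->
  (11 * k - 4 <= n)%N ->
  ~ contains_kP3 k e ->
  - Num.sqrt (((k - 1) * (n - k + 1))%:R : R) <= least_eigenvalue (adjmx R e) /\
  (least_eigenvalue (adjmx R e) = - Num.sqrt (((k - 1) * (n - k + 1))%:R : R)
     <-> is_complete_bipartite (k - 1) e).
Proof.
move=> e_simple k_ge2 n_large no_kP3; set c := Num.sqrt _.
have c_gt0 : 0 < c by rewrite sqrtr_gt0 ltr0n muln_gt0 subn_gt0 addn1 k_ge2.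
have lower : - c <= least_eigenvalue (adjmx R e).
  by apply: least_eigenvalue_ge; [rewrite oppr_le0 ltW | exact: kP3free_qform_ge].
split=> //; split=> [least_eq|Kk].
  have [|root_l] := least_eigenvalue_root (adjmx R e).
    by rewrite least_eq => /eqP; rewrite oppr_eq0 gt_eqF.
  have [x x_gt0 qx] := root_char_poly_qform root_l.
  by apply: kP3free_qform_eq x_gt0 _ => //; rewrite qx least_eq.
apply/eqP; rewrite eq_le lower andbT; apply: least_eigenvalue_le.
rewrite /c (_ : n - k + 1 = n - (k - 1))%N; last lia.
by apply: complete_bipartite_eigenvalue => //; apply/andP; split; lia.
Qed.
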